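(* Consider an execution of algorithm $\mathcal{A}_3$ (described in the context) in an asynchronous shared-memory system of $n$ processes in which up to $t$ processes, with $n>2t$, may crash. Let $X_i$ be the smallest (with respect to inclusion) among all the snapshots $X_j$ obtained by processes at the end of their snapshot loop, and let $x_i$ be its number of non-$\bot$ entries. For a value $v$, let $\alpha_v^i$ be the number of entries of $X_i$ equal to $v$. If $\alpha_v^i < x_i - t$, then no correct process decides $v$.
   Context: Model: processes communicate through an atomic snapshot object $S$ with one entry per process (initially all $\bot$), supporting $\mathrm{update}(m)$ (process $p_i$ writes $m$ into its own entry) and $\mathrm{snapshot}()$ (returns the vector of all entries), both atomic (linearizable); consequently any two snapshots returned are ordered by inclusion of their sets of non-$\bot$ entries. Asynchronous: no timing bounds. A crashed process stops taking steps; a correct process never crashes. Algorithm $\mathcal{A}_3$, code of $p_i$ with initial value $m$: $p_i$ performs $S.\mathrm{update}(m)$, then repeatedly calls $L_i := S.\mathrm{snapshot}()$ until $L_i$ has at least $n-t$ non-$\bot$ entries; it sets $X_i := L_i$ and $x_i :=$ number of non-$\bot$ entries of $X_i$. If at least $x_i - t$ entries of $X_i$ equal $m$, it decides $m$; else, if some value $v$ has at least $x_i - t$ entries in $X_i$ equal to it, it decides such a $v$; else it decides $\bot$. *)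

From mathcomp Require Import all_boot.
Set Implicit Arguments. Unset Strict Implicit. Unset Printing Implicit Defensive.

Section A3.
Variables (n t : nat) (V : eqType).

(* Contents of the snapshot object S: entry w is None (= bot) or Some m. *)
Definition snapv := ('I_n -> option V).

Definition nonbot (X : snapv) : nat := #|[set w : 'I_n | X w != None]|.
Definition alpha (X : snapv) (v : V) : nat := #|[set w : 'I_n | X w == Some v]|.
Definition snap_incl (X Y : snapv) : Prop :=
  [set w : 'I_n | X w != None] \subset [set w : 'I_n | Y w != None].

(* local state of a process: before its update, in the snapshot loop,
   or done (with its final snapshot X_i and its decision; None = bot) *)
Inductive lstate :=
| Start
| Loop
| Done of snapv & option V.

Record config := Config { mem : snapv; loc : 'I_n -> lstate }.

Definition init_config : config := Config (fun _ => None) (fun _ => Start).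

(* admissible decisions of a process with initial value m and snapshot X;
   the choice among several values v is left nondeterministic *)
Definition valid_decision (m : V) (X : snapv) (d : option V) : Prop :=
  if nonbot X - t <= alpha X m then d = Some m
  else if [exists w : 'I_n, if X w is Some u then nonbot X - t <= alpha X u else false]
  then exists u, d = Some u /\ nonbot X - t <= alpha X u
  else d = None.

Definition upd (f : 'I_n -> option V) (i : 'I_n) (x : option V) : snapv :=
  fun w => if w == i then x else f w.
Definition updl (f : 'I_n -> lstate) (i : 'I_n) (x : lstate) : 'I_n -> lstate :=
  fun w => if w == i then x else f w.

(* One atomic step of process i (update, or one snapshot followed by local
   computation). *)
Definition step (input : 'I_n -> V) (i : 'I_n) (c c' : config) : Prop :=
  match loc c i with
  | Start => c' = Config (upd (mem c) i (Some (input i))) (updl (loc c) i Loop)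
  | Loop =>
      if n - t <= nonbot (mem c) then
        exists d, valid_decision (input i) (mem c) d /\
          c' = Config (mem c) (updl (loc c) i (Done (mem c) d))
      else c' = c
  | Done _ _ => c' = c
  end.

Definition execution (input : 'I_n -> V) (sched : nat -> 'I_n)
    (c : nat -> config) : Prop :=
  c 0 = init_config /\ forall k, step input (sched k) (c k) (c k.+1).

Definition correct (sched : nat -> 'I_n) (j : 'I_n) : Prop :=
  forall k, exists2 k', k <= k' & sched k' = j.

Definition at_most_crashes (sched : nat -> 'I_n) : Prop :=
  exists F : {set 'I_n}, #|F| <= t /\ forall j, j \notin F -> correct sched j.

Definition obtained (c : nat -> config) (j : 'I_n) (X : snapv) : Prop :=
  exists k d, loc (c k) j = Done X d.

Definition decides (c : nat -> config) (j : 'I_n) (v : V) : Prop :=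
  exists k X, loc (c k) j = Done X (Some v).

End A3.
Arguments snapv : clear implicits.
Arguments config : clear implicits.

(* Once written, an entry of the snapshot object never changes, so every entry of every
   snapshot is either bot or the input of its owner; in particular a later snapshot extends
   an earlier one.  If Xi is contained in Xj, the entries of Xj equal to v are those of Xi
   plus at most the nonbot Xj - nonbot Xi entries that are new, so a decision of v from Xj
   (which needs alpha Xj v >= nonbot Xj - t) forces alpha Xi v >= nonbot Xi - t.  The
   argument applies to every process, crashed or not. *)
From Pilot Require Import Defs.
From mathcomp Require Import all_boot zify.

Set Implicit Arguments.
Unset Strict Implicit.
Unset Printing Implicit Defensive.

Section SnapshotCounting.
Variables (n : nat) (V : eqType).
Implicit Types (X Y : snapv n V) (v : V).

Definition snap_extends X Y : Prop := forall w, X w != None -> Y w = X w.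

Lemma snap_extends_incl X Y : snap_extends X Y -> snap_incl X Y.
Proof.
by move=> extXY; apply/subsetP => w; rewrite !inE => Xw; rewrite extXY.
Qed.

Lemma alpha_extends X Y v :
  snap_extends X Y -> alpha Y v <= alpha X v + (nonbot Y - nonbot X).
Proof.
move=> extXY; rewrite /alpha /nonbot.
set A := [set w | X w != None]; set B := [set w | Y w != None].
have AB : A \subset B by exact: snap_extends_incl.
have new_or_old : [set w | Y w == Some v] \subset [set w | X w == Some v] :|: (B :\: A).
  apply/subsetP => w; rewrite !inE => /eqP Yw.
  case Xw: (X w) => [u|] /=; last by rewrite Yw.
  by move: (extXY w); rewrite Xw Yw => /(_ isT) ->; rewrite eqxx.
rewrite -(setIidPr AB) -cardsD.
exact: leq_trans (subset_leq_card new_or_old) (leq_card_setU _ _).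
Qed.

Definition input_consistent (input : 'I_n -> V) X : Prop :=
  forall w, X w = None \/ X w = Some (input w).

Lemma input_consistent_extends input X Y :
  input_consistent input X -> input_consistent input Y ->
  snap_incl X Y -> snap_extends X Y.
Proof.
move=> consX consY /subsetP XY w Xw.
have := XY w; rewrite !inE => /(_ Xw) Yw.
by case: (consX w) Xw => [-> //|->] _; case: (consY w) Yw => [->|->].
Qed.

End SnapshotCounting.

Section ExecutionInvariant.
Variables (n t : nat) (V : eqType) (input : 'I_n -> V).

Lemma valid_decision_Some m (X : snapv n V) v :
  valid_decision t m X (Some v) -> nonbot X - t <= alpha X v.
Proof.
rewrite /valid_decision; case: ifP => [enough_m [->] //|_].
by case: ifP => // _ [u [[<-]]].
Qed.

Definition a3_invariant (c : config n V) : Prop :=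
  input_consistent input (Defs.mem c) /\
  forall w X d, loc c w = Done X d ->
    valid_decision t (input w) X d /\ input_consistent input X.

Lemma a3_invariant_step i c c' :
  a3_invariant c -> step t input i c c' -> a3_invariant c'.
Proof.
case=> consM doneI; rewrite /step.
case: (loc c i) => [||_ _].
- move=> ->; split=> [w|w X d] /=.
  + by rewrite /upd; case: eqP => [->|_]; [right | exact: consM].
  + by rewrite /updl; case: eqP => [//|_]; exact: doneI.
- case: ifP => _; last by move=> ->.
  case=> d [valid_d ->]; split=> // w X d' /=.
  by rewrite /updl; case: eqP => [-> [<- <-] //|_]; exact: doneI.
- by move=> ->.
Qed.

Lemma execution_invariant sched c :
  execution t input sched c -> forall k, a3_invariant (c k).
Proof.
case=> c0 steps; elim=> [|k IHk]; last exact: a3_invariant_step (steps k).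
by rewrite c0; split=> [w|//]; left.
Qed.

End ExecutionInvariant.

Theorem lemma12 (n t : nat) (V : eqType) (input : 'I_n -> V)
    (sched : nat -> 'I_n) (c : nat -> config n V) :
  2 * t < n ->
  execution t input sched c ->
  at_most_crashes t sched ->
  forall (i : 'I_n) (Xi : snapv n V),
    obtained c i Xi ->
    (forall (j : 'I_n) (Xj : snapv n V), obtained c j Xj -> snap_incl Xi Xj) ->
  forall v : V,
    alpha Xi v < nonbot Xi - t ->
    forall j : 'I_n, correct sched j -> ~ decides c j v.
Proof.
move=> _ exec _ i Xi [ki [di doneI]] Xi_min v few_v j _ [k [Xj doneJ]].
have inv := execution_invariant exec.
have [_ /(_ _ _ _ doneI) [_ consI]] := inv ki.
have [_ /(_ _ _ _ doneJ) [validJ consJ]] := inv k.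
have inclIJ : snap_incl Xi Xj by apply: (Xi_min j); exists k, (Some v).
have many_v := valid_decision_Some validJ.
have grow := alpha_extends v (input_consistent_extends consI consJ inclIJ).
have size_le := subset_leq_card inclIJ.
rewrite /nonbot in few_v many_v grow size_le.
lia.
Qed.
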